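(* Let $e_1,\dots,e_N\in\mathbb{R}^{d_e}$ satisfy $\|e_i\|_2=r$ for all $i$ and $\|e_i-e_j\|_2=f(|i-j|)\ge c|i-j|$ for a positive increasing function $f$ and an absolute constant $c>0$, and let $\Gamma\in\mathbb{R}^{N\times N}$ with $\Gamma_{ij}=\exp(-\|e_i-e_j\|_2^\nu/\ell)$, $\nu\in[1,2]$, $\ell>0$. For an integer $J$ let $\bar\Gamma_{ij}=\Gamma_{ij}\mathbf{1}\{|i-j|<J\}$ and $\Delta\Gamma=\Gamma-\bar\Gamma$. Then for any $\epsilon>0$, taking $$J=\Big\lceil\Big(\frac{\ell}{2c^\nu}\log\big(N\ell/(\epsilon^2c^\nu)\big)\Big)^{1/\nu}\Big\rceil+1$$ gives $\|\Delta\Gamma\|_{\rm F}\le\epsilon$.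
   Context: $\|\cdot\|_{\rm F}$ is the Frobenius norm. *)

From HB Require Import structures.
From mathcomp Require Import all_boot all_order all_algebra.
From mathcomp Require Import all_classical all_reals all_analysis.
Set Implicit Arguments. Unset Strict Implicit. Unset Printing Implicit Defensive.
Import Order.TTheory GRing.Theory Num.Theory.
Local Open Scope ring_scope.

Definition norm2 {R : realType} {n : nat} (v : 'rV[R]_n) : R :=
  Num.sqrt (\sum_(k < n) v 0 k ^+ 2).

Definition frob_norm {R : realType} {m n : nat} (A : 'M[R]_(m, n)) : R :=
  Num.sqrt (\sum_(i < m) \sum_(j < n) A i j ^+ 2).

Definition Gamma_mx {R : realType} {N de : nat} (e : 'I_N -> 'rV[R]_de)
  (nu ell : R) : 'M[R]_N :=
  \matrix_(i, j) expR (- (norm2 (e i - e j) `^ nu) / ell).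

Definition band_trunc {R : realType} {N : nat} (J : int) (G : 'M[R]_N) : 'M[R]_N :=
  \matrix_(i, j) (if `|(i : int) - (j : int)| < J then G i j else 0).

Definition DeltaGamma {R : realType} {N : nat} (J : int) (G : 'M[R]_N) : 'M[R]_N :=
  G - band_trunc J G.

Definition J_choice {R : realType} (N : nat) (c nu ell eps : R) : int :=
  Num.ceil (((ell / (2 * c `^ nu)) *
      ln (N%:R * ell / (eps ^+ 2 * c `^ nu))) `^ nu^-1) + 1.

From HB Require Import structures.
From mathcomp Require Import all_boot all_order all_algebra.
From mathcomp Require Import all_classical all_reals all_analysis.
From mathcomp Require Import zify ring lra.
Import Order.TTheory GRing.Theory Num.Theory.
Local Open Scope ring_scope.

(* Put a := 2 c^nu / ell, X := N ell / (eps^2 c^nu) and J = n0 + 1, so that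
   a n0^nu >= ln X by the choice of J.  An entry of Delta Gamma at distance
   k > n0 from the diagonal has square at most exp(-a k^nu), and since
   k^nu >= n0^nu + (k - n0) for nu >= 1 this is at most X^-1 q^(k - n0) with
   q = exp(-a).  Summing the geometric tails, each row contributes at most
   2 X^-1 q / (1 - q) <= 2 / (a X), so the squared Frobenius norm is at most
   2 N / (a X) = eps^2. *)

Section ToeplitzSums.
Context {R : realType} {h : nat -> R}.
(* h 0 = 0 absorbs the repeated value 0 of the truncated differences. *)
Hypotheses (h0 : h 0%N = 0) (h_ge0 : forall m, 0 <= h m).

Lemma sum_subn_le (i n : nat) :
  \sum_(j < n) h (j - i)%N <= \sum_(m < n) h m.
Proof.
elim: i n => [|i IHi] n; first by apply: ler_sum => j _; rewrite subn0.
case: n => [|n]; first by rewrite !big_ord0.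
rewrite big_ord_recl sub0n h0 add0r.
under eq_bigr => j _ do rewrite /= subSS.
by apply: le_trans (IHi n) _; rewrite big_ord_recr lerDl.
Qed.

Lemma sum_subnr_le (i n : nat) : (i < n)%N ->
  \sum_(j < n) h (i - j)%N <= \sum_(m < n) h m.
Proof.
move=> lt_in; rewrite (reindex_inj rev_ord_inj) /=.
rewrite (eq_bigr (fun j : 'I_n => h (j - (n.-1 - i))%N)); first exact: sum_subn_le.
by move=> j _; congr h; have := ltn_ord j; lia.
Qed.

Lemma sum_distn_le (i n : nat) : (i < n)%N ->
  \sum_(j < n) h `|i - j|%N <= 2 * \sum_(m < n) h m.
Proof.
move=> lt_in.
have -> : \sum_(j < n) h `|i - j|%N = \sum_(j < n) (h (j - i)%N + h (i - j)%N).
  apply: eq_bigr => j _; case: (leqP i j) => [le_ij|/ltnW le_ji].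
    by rewrite distnEr // (eqP (_ : i - j == 0)%N) ?subn_eq0 // h0 addr0.
  by rewrite distnEl // (eqP (_ : j - i == 0)%N) ?subn_eq0 // h0 add0r.
by rewrite big_split mulr2n mulrDl mul1r lerD ?sum_subn_le ?sum_subnr_le.
Qed.

End ToeplitzSums.

Section GeometricTail.
Context {R : realType}.

Definition pospow (q : R) (m : nat) : R := if m is 0%N then 0 else q ^+ m.

Lemma pospow_ge0 (q : R) m : 0 <= q -> 0 <= pospow q m.
Proof. by case: m => // m q_ge0; rewrite exprn_ge0. Qed.

Lemma pospow_gt0E (q : R) m : (0 < m)%N -> pospow q m = q ^+ m.
Proof. by case: m. Qed.

Lemma sum_pospow_le (q : R) (n : nat) : 0 <= q < 1 ->
  \sum_(m < n) pospow q m <= q / (1 - q).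
Proof.
move=> /andP[q_ge0 q_lt1].
have sum_succ : \sum_(m < n.+1) pospow q m = q * (1 - q ^+ n) / (1 - q).
  rewrite big_ord_recl add0r.
  under eq_bigr => m _ do rewrite /= exprS.
  rewrite -mulr_sumr -mulrA; congr (q * _).
  have q_neq1 : q - 1 != 0 by rewrite subr_eq0 lt_eqF.
  by rewrite -[1 - q ^+ n]opprB -[1 - q]opprB subrX1 invrN mulrN mulNr opprK
    mulrC mulKf.
apply: (le_trans (y := \sum_(m < n.+1) pospow q m)).
  by rewrite big_ord_recr lerDl pospow_ge0.
rewrite sum_succ ler_pM2r ?invr_gt0 ?subr_gt0 // ler_piMr //.
by rewrite gerBl exprn_ge0.
Qed.

Lemma expRN_geom_le (a : R) : 0 < a ->
  expR (- a) / (1 - expR (- a)) <= a^-1.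
Proof.
move=> a_gt0; have ea_gt1 : 1 < expR a by rewrite -expR0 ltr_expR.
have -> : expR (- a) / (1 - expR (- a)) = (expR a - 1)^-1.
  by rewrite expRN; field; rewrite !gt_eqF ?subr_gt0 // (lt_trans ltr01).
rewrite lef_pV2 ?posrE ?subr_gt0 //.
by rewrite lerBrDl expR_ge1Dx.
Qed.

Lemma sum_band_pospow_le (q : R) (n0 n : nat) : 0 <= q < 1 ->
  \sum_(i < n) \sum_(j < n) pospow q (`|(i : nat) - (j : nat)| - n0)%N
    <= n%:R * (2 * (q / (1 - q))).
Proof.
move=> q01; have /andP[q_ge0 _] := q01.
pose h k := pospow q (k - n0)%N.
rewrite mulr_natl -[n in _ *+ n]card_ord -sumr_const; apply: ler_sum => i _.
have h_ge0 m : 0 <= h m by apply: pospow_ge0.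
have h0 : h 0%N = 0 by rewrite /h sub0n.
apply: le_trans (sum_distn_le h0 h_ge0 _ _ (ltn_ord i)) _.
rewrite ler_wpM2l //; apply: le_trans _ (sum_pospow_le _ n q01).
by apply: (@sum_subn_le _ (pospow q)) => // m; apply: pospow_ge0.
Qed.

End GeometricTail.

Lemma powR_addB_le {R : realType} (s k nu : R) : 0 <= s -> s + 1 <= k -> 1 <= nu ->
  s `^ nu + (k - s) <= k `^ nu.
Proof.
move=> s_ge0 sk nu_ge1; have nu_gt0 : 0 < nu by lra.
have [k_ge0 le_sk] : 0 <= k /\ s <= k by split; lra.
have k_pow_ge1 : 1 <= k `^ (nu - 1).
  by rewrite -[X in X <= _](powRr0 k); apply: ler_powR; lra.
have s_pow_le : s `^ (nu - 1) <= k `^ (nu - 1).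
  by apply: ge0_ler_powR; rewrite ?nnegrE //; lra.
rewrite -(mulr_powRB1 s_ge0 nu_gt0) -(mulr_powRB1 k_ge0 nu_gt0).
have : s * s `^ (nu - 1) <= s * k `^ (nu - 1) by rewrite ler_wpM2l.
have : k - s <= (k - s) * k `^ (nu - 1) by rewrite ler_peMr // subr_ge0.
lra.
Qed.

Lemma expR_powR_tail_le {R : realType} (a L nu : R) (n0 k : nat) :
  0 <= a -> 1 <= nu -> L <= n0%:R `^ nu -> (n0 < k)%N ->
  expR (- (a * k%:R `^ nu)) <= expR (- (a * L)) * expR (- a) ^+ (k - n0).
Proof.
move=> a_ge0 nu_ge1 le_L lt_n0k.
rewrite -expRM_natl -expRD ler_expR natrB ?(ltnW lt_n0k) //.
have le_pow : n0%:R `^ nu + (k%:R - n0%:R) <= k%:R `^ nu :> R.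
  by apply: powR_addB_le; rewrite ?natr1 ?ler_nat.
have : a * (L + (k%:R - n0%:R)) <= a * k%:R `^ nu.
  by rewrite ler_wpM2l //; apply: le_trans le_pow; rewrite lerD2r.
lra.
Qed.

Lemma frob_norm_le {R : realType} {m n : nat} (A : 'M[R]_(m, n))
    (B : 'I_m -> 'I_n -> R) (eps : R) :
  0 <= eps -> (forall i j, A i j ^+ 2 <= B i j) ->
  \sum_(i < m) \sum_(j < n) B i j <= eps ^+ 2 -> frob_norm A <= eps.
Proof.
move=> eps_ge0 le_AB le_B.
rewrite -(ger0_norm eps_ge0) -sqrtr_sqr ler_sqrt ?exprn_ge0 //.
by apply: le_trans le_B; do 2!(apply: ler_sum => ? _).
Qed.

Lemma DeltaGamma_succE {R : realType} {N : nat} (n0 : nat) (G : 'M[R]_N) i j :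
  DeltaGamma n0.+1 G i j = if (n0 < `|(i : nat) - (j : nat)|)%N then G i j else 0.
Proof.
rewrite /DeltaGamma /band_trunc !mxE -abszE ltz_nat ltnS leqNgt.
by case: (n0 < _)%N; rewrite /= ?subr0 ?subrr.
Qed.

Lemma Gamma_mx_sqr_le {R : realType} {N de : nat} {e : 'I_N -> 'rV[R]_de}
    {c nu ell : R} {i j : 'I_N} :
  0 <= c -> 0 <= nu -> 0 < ell ->
  c * `|(i : nat) - (j : nat)|%:R <= norm2 (e i - e j) ->
  Gamma_mx e nu ell i j ^+ 2
    <= expR (- (2 * c `^ nu / ell * `|(i : nat) - (j : nat)|%:R `^ nu)).
Proof.
move=> c_ge0 nu_ge0 ell_gt0 le_dist; rewrite mxE -expRM_natl ler_expR.
set k := `|(i : nat) - (j : nat)|%:R; set D := norm2 (e i - e j).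
have le_pow : c `^ nu * k `^ nu <= D `^ nu.
  by rewrite -powRM ?ler0n // ge0_ler_powR ?nnegrE ?mulr_ge0 ?ler0n //;
    apply: le_trans le_dist; rewrite mulr_ge0.
have -> : 2%:R * (- (D `^ nu) / ell) = - (2 / ell * D `^ nu) by ring.
have -> : 2 * c `^ nu / ell * k `^ nu = 2 / ell * (c `^ nu * k `^ nu) by ring.
by rewrite lerN2 ler_wpM2l // divr_ge0 // ltW.
Qed.

Lemma DeltaGamma_sqr_le {R : realType} {N de : nat} (e : 'I_N -> 'rV[R]_de)
    (c nu ell L : R) (n0 : nat) (i j : 'I_N) :
  0 <= c -> 1 <= nu -> 0 < ell -> L <= n0%:R `^ nu ->
  c * `|(i : nat) - (j : nat)|%:R <= norm2 (e i - e j) ->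
  DeltaGamma n0.+1 (Gamma_mx e nu ell) i j ^+ 2
    <= expR (- (2 * c `^ nu / ell * L))
       * pospow (expR (- (2 * c `^ nu / ell))) (`|(i : nat) - (j : nat)| - n0)%N.
Proof.
move=> c_ge0 nu_ge1 ell_gt0 le_L le_dist.
have a_ge0 : 0 <= 2 * c `^ nu / ell by rewrite divr_ge0 ?mulr_ge0 ?powR_ge0 ?ltW.
rewrite DeltaGamma_succE; case: ifP => [lt_n0k|_]; last first.
  by rewrite expr2 mul0r mulr_ge0 ?expR_ge0 // pospow_ge0 ?expR_ge0.
rewrite pospow_gt0E ?subn_gt0 //.
have nu_ge0 : 0 <= nu := le_trans ler01 nu_ge1.
apply: le_trans (Gamma_mx_sqr_le c_ge0 nu_ge0 ell_gt0 le_dist) _.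
exact: expR_powR_tail_le.
Qed.

Lemma J_choice_spec {R : realType} (N : nat) (c nu ell eps : R) : 0 < nu ->
  exists2 n0 : nat, J_choice N c nu ell eps = n0.+1
    & ell / (2 * c `^ nu) * ln (N%:R * ell / (eps ^+ 2 * c `^ nu)) <= n0%:R `^ nu.
Proof.
move=> nu_gt0; set L := _ * ln _; set T := L `^ nu^-1.
have ceil_ge0 : 0 <= Num.ceil T by rewrite ceil_ge0 // (lt_le_trans _ (powR_ge0 _ _)) ?ltrN10.
exists `|Num.ceil T|%N; first by rewrite /J_choice -/L -/T -addn1 PoszD gez0_abs.
have [L_ge0|/ltW L_le0] := leP 0 L; last exact: le_trans L_le0 (powR_ge0 _ _).
have -> : L = T `^ nu by rewrite -powRrM mulVf ?gt_eqF ?powRr1.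
apply: ge0_ler_powR; rewrite ?nnegrE ?powR_ge0 ?ler0n ?(ltW nu_gt0) //.
by rewrite natr_absz ger0_norm // ceil_ge.
Qed.

Theorem lemma4 (R : realType) (N de : nat) (e : 'I_N -> 'rV[R]_de)
  (r c nu ell : R) (f : nat -> R) :
  (forall i : 'I_N, norm2 (e i) = r) ->
  (forall k : nat, (0 < k)%N -> 0 < f k) ->
  (forall m n : nat, (m < n)%N -> f m < f n) ->
  (forall i j : 'I_N, norm2 (e i - e j) = f `|(i : nat) - (j : nat)|%N) ->
  0 < c ->
  (forall k : nat, c * k%:R <= f k) ->
  1 <= nu <= 2 -> 0 < ell ->
  forall eps : R, 0 < eps ->
    frob_norm (DeltaGamma (J_choice N c nu ell eps) (Gamma_mx e nu ell)) <= eps.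
Proof.
move=> _ _ _ dist_e c_gt0 le_cf /andP[nu_ge1 _] ell_gt0 eps eps_gt0.
case: N e dist_e => [|N] e dist_e; first by rewrite /frob_norm big_ord0 sqrtr0 ltW.
have nu_gt0 : 0 < nu := lt_le_trans ltr01 nu_ge1.
have [n0 -> le_L] := J_choice_spec N.+1 c nu ell eps nu_gt0.
have cnu_gt0 : 0 < c `^ nu by rewrite powR_gt0.
set a := 2 * c `^ nu / ell; set X := N.+1%:R * ell / (eps ^+ 2 * c `^ nu).
have a_gt0 : 0 < a by rewrite divr_gt0 ?mulr_gt0.
have X_gt0 : 0 < X by rewrite !divr_gt0 ?mulr_gt0 ?exprn_gt0 ?ltr0Sn.
have expR_aL : expR (- (a * (ell / (2 * c `^ nu) * ln X))) = X^-1.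
  rewrite mulrA (_ : a * _ = 1) ?mul1r ?expRN ?lnK //.
  by rewrite /a; field; rewrite !gt_eqF.
set q := expR (- a).
have q01 : 0 <= q < 1 by rewrite expR_ge0 -expR0 ltr_expR oppr_lt0.
apply: (frob_norm_le _ (fun i j => X^-1 * pospow q (`|(i : nat) - (j : nat)| - n0)%N)
  _ (ltW eps_gt0)) => [i j|].
  rewrite -expR_aL; apply: DeltaGamma_sqr_le (ltW c_gt0) nu_ge1 ell_gt0 le_L _.
  by rewrite dist_e le_cf.
under eq_bigr do rewrite -mulr_sumr; rewrite -mulr_sumr.
have -> : eps ^+ 2 = X^-1 * (N.+1%:R * (2 * a^-1)).
  by rewrite /X /a; field; rewrite !gt_eqF // ltr0Sn.
rewrite ler_wpM2l ?invr_ge0 ?(ltW X_gt0) //.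
apply: le_trans (sum_band_pospow_le q n0 N.+1 q01) _.
by rewrite ler_wpM2l // ler_wpM2l // expRN_geom_le.
Qed.
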